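(* Let $S$ be a finite semigroup. Then $S$ is DSC if and only if $S$ is a group.
   Context: A diagonal subsemigroup of $S\times S$ is a subsemigroup containing $\{(s,s)\colon s\in S\}$; a congruence is a symmetric and transitive diagonal subsemigroup; $S$ is DSC if every diagonal subsemigroup of $S\times S$ is a congruence on $S$. *)

From mathcomp Require Import all_boot.

Set Implicit Arguments.
Unset Strict Implicit.
Unset Printing Implicit Defensive.

Definition associative_op (T : Type) (op : T -> T -> T) : Prop :=
  forall x y z, op x (op y z) = op (op x y) z.

Definition diagonal_subsemigroup (T : Type) (op : T -> T -> T)
    (rho : T -> T -> Prop) : Prop :=
  (forall s, rho s s) /\
  (forall a b c d, rho a b -> rho c d -> rho (op a c) (op b d)).

Definition congruence (T : Type) (op : T -> T -> T)
    (rho : T -> T -> Prop) : Prop :=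
  diagonal_subsemigroup op rho /\
  (forall a b, rho a b -> rho b a) /\
  (forall a b c, rho a b -> rho b c -> rho a c).

Definition DSC (T : Type) (op : T -> T -> T) : Prop :=
  forall rho : T -> T -> Prop, diagonal_subsemigroup op rho -> congruence op rho.

Definition is_group (T : Type) (op : T -> T -> T) : Prop :=
  exists e : T,
    (forall x, op e x = x /\ op x e = x) /\
    (forall x, exists y, op x y = e /\ op y x = e).

(* A finite group is DSC: if rho(a, b) then rho(1, b a^-1), and the inverse of
   c is a positive power of c, so rho(1, c) gives rho(1, c^-1); multiplying back
   by the diagonal yields symmetry and transitivity.
   Conversely, let S be DSC.  The diagonal subsemigroup "p = q or q in S a S"
   is symmetric, so S is simple; finiteness then makes S completely simple:
   x in x c S and c in S x c for all x, c.  Hence the relations x R y (y in x S)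
   and x L y (y in S x) are equivalences and compatible on the right resp. left.
   If x L y, then "a L b and (a R b or (a R x and b R y))" is a diagonal
   subsemigroup containing (x, y); its symmetry forces x R y.  So L is contained
   in R, dually R in L, and since x R xy L y every two elements are R- and
   L-related: all equations a z = b and z a = b are solvable, and S is a group. *)
From mathcomp Require Import all_boot.
From mathcomp Require Import zify.

Set Implicit Arguments.
Unset Strict Implicit.
Unset Printing Implicit Defensive.

Definition opposite (T : Type) (op : T -> T -> T) : T -> T -> T :=
  fun x y => op y x.

(* [rdiv op x y] says y \in x S; [rdiv (opposite op) x y] says y \in S x. *)
Definition rdiv (T : Type) (op : T -> T -> T) (x y : T) : Prop :=
  exists s, y = op x s.

Definition simple_semigroup (T : Type) (op : T -> T -> T) : Prop :=
  forall a x, exists u v, x = op u (op a v).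

Section Opposite.
Variables (T : Type) (op : T -> T -> T).

Lemma associative_opposite : associative_op op -> associative_op (opposite op).
Proof. by move=> assoc x y z; rewrite /opposite assoc. Qed.

Lemma simple_opposite :
  associative_op op -> simple_semigroup op -> simple_semigroup (opposite op).
Proof.
move=> assoc simple a x; have [u [v ->]] := simple a x.
by exists v, u; rewrite /opposite assoc.
Qed.

Lemma diagonal_subsemigroup_opposite (rho : T -> T -> Prop) :
  diagonal_subsemigroup op rho -> diagonal_subsemigroup (opposite op) rho.
Proof. by move=> [refl mul]; split=> // a b c d rab rcd; apply: mul. Qed.

Lemma congruence_opposite (rho : T -> T -> Prop) :
  congruence op rho -> congruence (opposite op) rho.
Proof. by move=> [diag equiv]; split; first exact: diagonal_subsemigroup_opposite. Qed.

End Opposite.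

Lemma DSC_opposite (T : Type) (op : T -> T -> T) : DSC op -> DSC (opposite op).
Proof.
move=> dsc rho diag; apply: congruence_opposite (dsc _ _).
exact: (@diagonal_subsemigroup_opposite _ (opposite op)).
Qed.

Section Powers.
Variables (T : Type) (op : T -> T -> T).
Hypothesis assoc : associative_op op.

(* [spow x n] is x^(n+1): a semigroup has no x^0. *)
Fixpoint spow (x : T) (n : nat) : T :=
  if n is n'.+1 then op x (spow x n') else x.

Lemma spow_comm x n : op (spow x n) x = op x (spow x n).
Proof. by elim: n => [|n IH] //=; rewrite -assoc IH. Qed.

Lemma spow_add x m n : op (spow x m) (spow x n) = spow x (m + n).+1.
Proof. by elim: m => [|m IH] //=; rewrite -assoc IH. Qed.

Lemma spow_shift x i j :
  spow x i = spow x j -> forall m, spow x (m + i) = spow x (m + j).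
Proof. by move=> eq_ij; elim=> [|m IH] //; rewrite !addSn /= IH. Qed.

Lemma spow_sandwich x u y :
  x = op u (op x y) -> forall k, x = op (spow u k) (op x (spow y k)).
Proof.
move=> x_eq; elim=> [|k IH] //=.
by rewrite {1}x_eq {1}IH -(spow_comm y k) !assoc.
Qed.

End Powers.

Lemma exists_idempotent_spow (T : finType) (op : T -> T -> T)
    (assoc : associative_op op) (x : T) :
  exists n, op (spow op x n) (spow op x n) = spow op x n.
Proof.
have [i [d [d_gt0 x_i]]] : exists i d, 0 < d /\ spow op x i = spow op x (d + i).
  have /injectivePn [i [j neq_ij eq_ij]] :
      ~~ injectiveb (fun k : 'I_#|T|.+1 => spow op x k).
    by apply/injectiveP => /leq_card; rewrite card_ord ltnn.
  case: (ltngtP i j) => [lt_ij | lt_ji | /val_inj eq_ij']; last first.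
  - by rewrite eq_ij' eqxx in neq_ij.
  - by exists j, (i - j); split; [lia | rewrite -eq_ij subnK // ltnW].
  - by exists i, (j - i); split; [lia | rewrite eq_ij subnK // ltnW].
have periodic t m : spow op x (m + i) = spow op x (t * d + m + i).
  elim: t => [|t IH]; first by rewrite mul0n.
  by rewrite IH (spow_shift x_i) mulSn; congr spow; lia.
(* x^((i+1) d) is idempotent: (i+1) d is a multiple of the period d past the preperiod i. *)
have big_period : i < i.+1 * d by nia.
exists (i.+1 * d).-1; rewrite (spow_add assoc).
have N_eq : (i.+1 * d).-1 - i + i = (i.+1 * d).-1 by lia.
by rewrite -[in RHS]N_eq (periodic i.+1); congr spow; lia.
Qed.

(* x = u^n x y^n for every n, and some y^n is idempotent. *)
Lemma rdiv_of_sandwich (T : finType) (op : T -> T -> T)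
    (assoc : associative_op op) (x u y : T) :
  x = op u (op x y) -> exists s, x = op x (op y s).
Proof.
move=> x_eq; have [k idem] := exists_idempotent_spow assoc y.
have x_sandwich := spow_sandwich assoc x_eq k.
have x_fix : x = op x (spow op y k).
  by rewrite {2}x_sandwich -!assoc idem -x_sandwich.
exists (spow op y (k + k)).
by rewrite {1}x_fix -idem (spow_add assoc).
Qed.

Section SimpleSemigroup.
Variables (T : finType) (op : T -> T -> T).
Hypotheses (assoc : associative_op op) (simple : simple_semigroup op).
Local Notation R := (rdiv op).

Lemma rdiv_mulr x c : R (op x c) x.
Proof.
have [u [v x_eq]] := simple (op x c) x.
rewrite -assoc in x_eq; have [s x_s] := rdiv_of_sandwich assoc x_eq.
by exists (op v s); rewrite {1}x_s !assoc.
Qed.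

Lemma rdiv_refl x : R x x.
Proof. by have [w x_eq] := rdiv_mulr x x; exists (op x w); rewrite assoc. Qed.

Lemma rdiv_sym x y : R x y -> R y x.
Proof. by move=> [s ->]; apply: rdiv_mulr. Qed.

Lemma rdiv_trans x y z : R x y -> R y z -> R x z.
Proof. by move=> [s ->] [t ->]; exists (op s t); rewrite assoc. Qed.

Lemma rdiv_mul a b c d : R a b -> R (op a c) (op b d).
Proof.
move=> [s ->]; have [w a_eq] := rdiv_mulr a c.
by exists (op w (op s d)); rewrite {1}a_eq !assoc.
Qed.

End SimpleSemigroup.

Lemma simple_of_DSC (T : Type) (op : T -> T -> T) :
  associative_op op -> DSC op -> simple_semigroup op.
Proof.
move=> assoc dsc a x.
pose rho p q := p = q \/ exists u v, q = op u (op a v).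
have diag : diagonal_subsemigroup op rho.
  split=> [s|a1 b1 c1 d1 [->|[u [v ->]]] [->|[u' [v' ->]]]]; first by left.
  - by left.
  - by right; exists (op b1 u'), v'; rewrite !assoc.
  - by right; exists u, (op v d1); rewrite !assoc.
  - by right; exists u, (op v (op u' (op a v'))); rewrite !assoc.
have [_ [sym _]] := dsc rho diag.
have [<-|//] := sym x (op a (op a a)) (or_intror (ex_intro _ a (ex_intro _ a erefl))).
by exists a, a.
Qed.

Section DSCSemigroup.
Variables (T : finType) (op : T -> T -> T).
Hypotheses (assoc : associative_op op) (dsc : DSC op).
Local Notation R := (rdiv op).
Local Notation L := (rdiv (opposite op)).

Let simple := simple_of_DSC assoc dsc.
Let simple' := simple_opposite assoc simple.
Let assoc' := associative_opposite assoc.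

Lemma rdiv_of_ldiv x y : L x y -> R x y.
Proof.
move=> Lxy; pose rho a b := L a b /\ (R a b \/ (R a x /\ R b y)).
have diag : diagonal_subsemigroup op rho.
  split=> [s|a b c d [Lab Rab] [Lcd _]].
    by split; [apply: rdiv_refl | left; apply: rdiv_refl].
  split; first exact: (rdiv_mul assoc' simple' a b Lcd).
  case: Rab => [Rab | [Rax Rby]]; first by left; apply: rdiv_mul.
  right; split.
  - exact: (rdiv_trans assoc (rdiv_mulr assoc simple a c) Rax).
  - exact: (rdiv_trans assoc (rdiv_mulr assoc simple b d) Rby).
have rho_xy : rho x y.
  by split=> //; right; split; exact: (rdiv_refl assoc simple).
have [_ [sym _]] := dsc diag.
by case: (sym x y rho_xy) => _ [Ryx | [Ryx _]]; apply: rdiv_sym.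
Qed.

Lemma rdiv_total x y : R x y.
Proof.
apply: (rdiv_trans assoc (rdiv_sym assoc simple (rdiv_mulr assoc simple x y))).
by apply: rdiv_of_ldiv; apply: (rdiv_mulr assoc' simple' y x).
Qed.

End DSCSemigroup.

Lemma group_of_divisible (T : Type) (op : T -> T -> T) :
  associative_op op -> inhabited T ->
  (forall x y, rdiv op x y) -> (forall x y, rdiv (opposite op) x y) ->
  is_group op.
Proof.
move=> assoc [a] Rall Lall'.
have Lall x y : exists s, y = op s x := Lall' x y.
have [e a_e] := Rall a a; have [f a_f] := Lall a a.
have mulx1 y : op y e = y by have [s ->] := Lall a y; rewrite -assoc -a_e.
have mul1x y : op f y = y by have [s ->] := Rall a y; rewrite assoc -a_f.
have e_f : e = f by rewrite -{1}(mul1x e) mulx1.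
exists e; split=> [x | x]; first by rewrite {1}e_f mul1x mulx1.
have [y e_xy] := Rall x e; have [z e_zx] := Lall x e.
have y_z : y = z by rewrite -(mulx1 z) e_xy assoc -e_zx e_f mul1x.
by exists y; rewrite -e_xy y_z -e_zx.
Qed.

Lemma group_of_DSC (T : finType) (op : T -> T -> T) :
  associative_op op -> inhabited T -> DSC op -> is_group op.
Proof.
move=> assoc inh dsc; apply: group_of_divisible => //.
- exact: rdiv_total.
- exact: rdiv_total (associative_opposite assoc) (DSC_opposite dsc).
Qed.

Section FiniteGroup.
Variables (T : finType) (op : T -> T -> T) (e : T).
Hypotheses (assoc : associative_op op)
  (mul1x : forall x, op e x = x) (mulx1 : forall x, op x e = x)
  (inverse : forall x, exists y, op x y = e /\ op y x = e).

Lemma idempotent_unit f : op f f = f -> f = e.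
Proof.
have [f' [_ f'f]] := inverse f.
by move=> idem; rewrite -[RHS]f'f -{2}idem assoc f'f mul1x.
Qed.

Lemma inverse_spow c c' : op c' c = e -> exists n, c' = spow op c n.
Proof.
move=> c'c; have [k idem] := exists_idempotent_spow assoc c.
have ck_e := idempotent_unit idem.
exists (k + k); rewrite -[LHS]mulx1 -{1}ck_e -idem (spow_add assoc) /=.
by rewrite assoc c'c mul1x.
Qed.

Variable rho : T -> T -> Prop.
Hypothesis diag : diagonal_subsemigroup op rho.

Lemma rho_unit_spow c n : rho e c -> rho e (spow op c n).
Proof.
move=> rec; elim: n => [|n IH] //=.
by rewrite -(mul1x e); apply: diag.2.
Qed.

Lemma rho_unit_inverse c c' : rho e c -> op c' c = e -> rho e c'.
Proof. by move=> rec /inverse_spow [n ->]; apply: rho_unit_spow. Qed.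

Lemma rho_unit_div a a' b : rho a b -> op a a' = e -> rho e (op b a').
Proof. by move=> rab aa'; rewrite -aa'; apply: diag.2 (diag.1 a'). Qed.

Lemma rho_sym a b : rho a b -> rho b a.
Proof.
move=> rab; have [a' [aa' a'a]] := inverse a.
have [g' [_ g'g]] := inverse (op b a').
have rg' := rho_unit_inverse (rho_unit_div rab aa') g'g.
have <- : op g' b = a by rewrite -(mulx1 b) -a'a !assoc -(assoc g') g'g mul1x.
by rewrite -{1}(mul1x b); apply: diag.2 rg' (diag.1 b).
Qed.

Lemma rho_trans a b c : rho a b -> rho b c -> rho a c.
Proof.
move=> rab rbc; have [a' [aa' a'a]] := inverse a; have [b' [bb' b'b]] := inverse b.
have := diag.2 _ _ _ _ (diag.2 _ _ _ _ (rho_unit_div rbc bb') (rho_unit_div rab aa')) (diag.1 a).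
by rewrite !mul1x -!assoc a'a mulx1 b'b mulx1.
Qed.

End FiniteGroup.

Lemma DSC_of_group (T : finType) (op : T -> T -> T) :
  associative_op op -> is_group op -> DSC op.
Proof.
move=> assoc [e [unit inverse]] rho diag.
have mul1x x : op e x = x by have [] := unit x.
have mulx1 x : op x e = x by have [] := unit x.
split=> //; split.
- exact: rho_sym.
- exact: rho_trans.
Qed.

Theorem mainTheorem7 (T : finType) (op : T -> T -> T)
    (assoc : associative_op op) (nonempty : inhabited T) :
  DSC op <-> is_group op.
Proof. by split; [apply: group_of_DSC | apply: DSC_of_group]. Qed.
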